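(* Let $s\geq 2$ be an even integer, let $m\geq 3$ be an integer, let $t\geq 1$ be an integer, and let $n$ be an integer with $n\geq \left(\frac{sm}{2}-1\right)(2sm-1)+1$. Then $$R(tP_n,J_{s,m})=tn+\frac{sm}{2}-1.$$
   Context: All graphs are finite and simple. For graphs $G$ and $H$, the Ramsey number $R(G,H)$ is the least natural number $N$ such that for every graph $F$ on $N$ vertices, either $F$ contains $G$ as a subgraph or the complement $\overline{F}$ contains $H$ as a subgraph. $P_n$ denotes the path on $n$ vertices, and $tP_n$ denotes the disjoint union of $t$ copies of $P_n$. For integers $s,m\geq 2$, the generalized Jahangir graph $J_{s,m}$ is the graph on $sm+1$ vertices consisting of a cycle $C_{sm}=v_1v_2\cdots v_{sm}v_1$ together with one additional vertex adjacent to exactly the $m$ cycle vertices $v_1, v_{s+1}, v_{2s+1},\ldots,v_{(m-1)s+1}$ (i.e., $m$ vertices of the cycle at distance $s$ from each other along the cycle). *)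

From mathcomp Require Import all_boot.
Set Implicit Arguments. Unset Strict Implicit. Unset Printing Implicit Defensive.

Definition simple_graph (V : finType) (e : rel V) : Prop :=
  symmetric e /\ irreflexive e.

Definition complement (V : finType) (e : rel V) : rel V :=
  fun x y => (x != y) && ~~ e x y.

Definition contains_subgraph (W : finType) (F : rel W) (V : finType) (G : rel V) : Prop :=
  exists f : V -> W, injective f /\ forall x y, G x y -> F (f x) (f y).

Definition ramsey_prop (V1 : finType) (G : rel V1) (V2 : finType) (H : rel V2) (N : nat) : Prop :=
  forall F : rel 'I_N, simple_graph F ->
    contains_subgraph F G \/ contains_subgraph (complement F) H.

Definition is_ramsey_number (V1 : finType) (G : rel V1) (V2 : finType) (H : rel V2) (r : nat) : Prop :=
  ramsey_prop G H r /\ forall N, N < r -> ~ ramsey_prop G H N.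

(* t P_n : vertices (i, a), i < t copy index, a < n position on the path. *)
Definition tPn_rel (t n : nat) : rel ('I_t * 'I_n) :=
  fun u v => (u.1 == v.1) &&
             (((val u.2).+1 == val v.2) || ((val v.2).+1 == val u.2)).

(* Generalized Jahangir graph J_{s,m}: cycle v_0 ... v_{sm-1} (0-indexed,
   index i corresponds to v_{i+1}) on Some i, plus hub None adjacent to
   v_i exactly when s divides i, i.e. to v_1, v_{s+1}, ..., v_{(m-1)s+1}. *)
Definition jahangir_rel (s m : nat) : rel (option 'I_(s * m)) :=
  fun u v =>
    match u, v with
    | Some i, Some j => (j == (i.+1 %% (s * m)) :> nat) || (i == (j.+1 %% (s * m)) :> nat)
    | None, Some j => s %| j
    | Some i, None => s %| i
    | None, None => false
    end.
Arguments tPn_rel t n : clear implicits.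
Arguments jahangir_rel s m : clear implicits.

(* Write k = sm/2.  For the lower bound, take disjoint cliques on tn - 1 and
   at most k - 1 vertices.  Every copy of P_n lies inside one clique, so t of
   them do not fit.  The complement is complete bipartite, and the cycle of
   J_{s,m} alternates between its two parts, so each part would receive k
   cycle vertices.

   For the upper bound, J_{s,m} is bipartite with classes of sizes k + 1 (the
   hub and the odd cycle vertices) and k, so it suffices to find in F either t
   disjoint paths on n vertices or an anticomplete pair: disjoint X, Y with
   |X| >= k + 1, |Y| >= k and no F-edge between them.  Paths are removed one at
   a time from a vertex set D with |D| >= n + k - 1.  If a longest path in D
   has at least 2k^2 + 1 vertices, then either an outside vertex has 2k
   neighbours on it, and with their successors forms a stable set of size
   2k + 1, or k outside vertices have at most k(2k - 1) neighbours on it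
   altogether, leaving k + 1 path vertices adjacent to none of them.  If all
   paths are short, a depth-first search stops with k + 1 finished vertices
   that have no edge to the at least k unvisited ones. *)

From mathcomp Require Import all_boot zify.
From Stdlib Require Import Classical.
Set Implicit Arguments. Unset Strict Implicit. Unset Printing Implicit Defensive.

Lemma bounded_ex_max (P : nat -> Prop) b :
  (forall l, P l -> l <= b) -> (exists l, P l) ->
  exists l, P l /\ forall l', P l' -> l' <= l.
Proof.
move=> leb [l0 Pl0].
suff: forall d l, b - l <= d -> P l -> exists l, P l /\ forall l', P l' -> l' <= l.
  by apply; [exact: leqnn | exact: Pl0].
elim=> [|d IH] l hd Pl.
  by exists l; split=> // l' /leb; have := leb _ Pl; lia.
case: (classic (exists l', P l' /\ l < l')) => [[l' [Pl' ll']]|nomore].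
  by apply: (IH l') => //; have := leb _ Pl'; lia.
exists l; split=> // l' Pl'; rewrite leqNgt; apply/negP => ll'.
by apply: nomore; exists l'.
Qed.

Lemma card_le_inj_interval (T : finType) N (h : T -> 'I_N) lo hi :
  injective h -> (forall x, lo <= h x < hi) -> #|T| <= hi - lo.
Proof.
move=> hinj hr.
have lt x : h x - lo < hi - lo by have := hr x; lia.
pose g x : 'I_(hi - lo) := Ordinal (lt x).
suff ginj : injective g by have := leq_card g ginj; rewrite card_ord.
move=> x y /(congr1 val) /= e; apply: hinj; apply: ord_inj.
have := hr x; have := hr y; lia.
Qed.

Lemma exists_subset_card (T : finType) (A : {set T}) a :
  a <= #|A| -> exists2 B : {set T}, B \subset A & #|B| = a.
Proof.
move=> aA; exists [set x in take a (enum A)].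
  by apply/subsetP=> x; rewrite inE => /mem_take; rewrite mem_enum.
rewrite cardsE (card_uniqP _); last by apply: take_uniq; exact: enum_uniq.
by rewrite size_takel // -cardE.
Qed.

Lemma card_bigcup_le (T I : finType) (P : pred I) (A : I -> {set T}) :
  #|\bigcup_(i | P i) A i| <= \sum_(i | P i) #|A i|.
Proof.
elim/big_rec2: _ => [|i U n _ IH]; first by rewrite cards0.
by rewrite (leq_trans (leq_card_setU _ _).1) ?leq_add2l.
Qed.

Section HostGraph.
Variables (V : finType) (F : rel V).
Hypothesis Fsym : symmetric F.
Hypothesis Firr : irreflexive F.

Definition anticomplete (X Y : {set V}) : Prop :=
  [disjoint X & Y] /\ forall x y, x \in X -> y \in Y -> ~~ F x y.

Definition has_anticomplete_pair (k : nat) : Prop :=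
  exists X Y : {set V}, [/\ anticomplete X Y, k.+1 <= #|X| & k <= #|Y|].

Lemma anticomplete_pair_of_stable (I : {set V}) k :
  k.*2.+1 <= #|I| -> {in I &, forall x y, ~~ F x y} -> has_anticomplete_pair k.
Proof.
move=> cI stable; have [Y YI cY] := @exists_subset_card _ I k ltac:(lia).
exists (I :\: Y), Y; split; last by rewrite cY.
- split; first by rewrite disjoints_subset setDE subsetIr.
  move=> x y /setDP [xI _] /(subsetP YI) yI; exact: stable.
- rewrite cardsDS //; lia.
Qed.

Lemma anticomplete_pair_of_sparse (P W : {set V}) k d :
  [disjoint P & W] -> k <= #|W| -> k * d + k.+1 <= #|P| ->
  (forall w, w \in W -> #|P :&: [set v | F w v]| <= d) -> has_anticomplete_pair k.
Proof.
move=> dPW cW cP sparse; have [Y YW cY] := exists_subset_card cW.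
pose NY := \bigcup_(y in Y) (P :&: [set v | F y v]).
have NYP : NY \subset P by apply/bigcupsP => y _; exact: subsetIl.
have cNY : #|NY| <= k * d.
  apply: leq_trans (card_bigcup_le _ _) _; rewrite -cY -sum_nat_const.
  by apply: leq_sum => y /(subsetP YW); exact: sparse.
exists (P :\: NY), Y; split; last by rewrite cY.
- split; first exact: disjointW (subsetDl _ _) YW dPW.
  move=> x y /setDP [xP xNY] yY; apply: contra xNY => Fxy.
  by apply/bigcupP; exists y => //; rewrite !inE xP Fsym.
- rewrite cardsDS //; lia.
Qed.

Definition simple_path (D : {set V}) (g : nat -> V) (l : nat) : Prop :=
  [/\ forall a, a < l -> g a \in D,
      forall a b, a < l -> b < l -> g a = g b -> a = b
    & forall a, a.+1 < l -> F (g a) (g a.+1)].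

Lemma simple_path_sub (D D' : {set V}) g l :
  D \subset D' -> simple_path D g l -> simple_path D' g l.
Proof. by move=> DD' [gD ginj gF]; split=> // a /gD /(subsetP DD'). Qed.

Lemma simple_path_prefix (D : {set V}) g l l' :
  l' <= l -> simple_path D g l -> simple_path D g l'.
Proof.
move=> l'l [gD ginj gF]; split=> [a al|a b al bl|a al]; last (apply: gF; lia).
  by apply: gD; lia.
by apply: ginj; lia.
Qed.

Lemma simple_path_size (D : {set V}) g l : simple_path D g l -> l <= #|D|.
Proof.
move=> [gD ginj _].
have inj : injective (fun i : 'I_l => g i).
  by move=> i j /ginj => /(_ (ltn_ord i) (ltn_ord j)) /val_inj.
rewrite -[l]card_ord -cardsT -(card_imset _ inj).
by apply/subset_leq_card/subsetP => _ /imsetP [i _ ->]; exact: gD.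
Qed.

Lemma simple_path_adj (D : {set V}) g l a b : simple_path D g l -> a < l -> b < l ->
  b = a.+1 \/ a = b.+1 -> F (g a) (g b).
Proof.
by move=> [_ _ gF] al bl [eb|ea]; subst; [|rewrite Fsym]; apply: gF.
Qed.

Lemma simple_path_insert (D : {set V}) f l w p (h : nat -> nat) :
  simple_path D f l -> w \in D -> (forall a, a < l -> f a <> w) ->
  (forall x, x < l.+1 -> x <> p -> h x < l) ->
  (forall x y, x < l.+1 -> y < l.+1 -> x <> p -> y <> p -> h x = h y -> x = y) ->
  (forall x, x.+1 < l.+1 ->
     F (if x == p then w else f (h x)) (if x.+1 == p then w else f (h x.+1))) ->
  simple_path D (fun x => if x == p then w else f (h x)) l.+1.
Proof.
move=> [fD finj _] wD fw hl hinj adj; split=> // [a al|a b al bl].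
  by case: eqP => // ap; apply/fD/hl.
case: eqP => ap; case: eqP => bp.
- by rewrite ap bp.
- by move=> e; case: (fw (h b)); [exact: hl | rewrite e].
- by move=> e; case: (fw (h a)); [exact: hl | rewrite e].
- by move=> /finj e; apply: hinj => //; apply: e; exact: hl.
Qed.

Section LongestPath.
Variables (D : {set V}) (f : nat -> V) (l : nat).
Hypothesis fpath : simple_path D f l.
Hypothesis longest : forall g l', simple_path D g l' -> l' <= l.
Variable w : V.
Hypothesis wD : w \in D.
Hypothesis w_off : forall a, a < l -> f a <> w.

Ltac case_ifs := repeat match goal with |- context [if ?b then _ else _] =>
  case: (boolP b) => ? end.

Let longer_path_absurd g : ~ simple_path D g l.+1.
Proof. by move/longest; rewrite ltnn. Qed.

Lemma longest_path_last_nonadj : 0 < l -> ~~ F w (f l.-1).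
Proof.
move=> l0; apply/negP => Fw.
apply: (@longer_path_absurd (fun x => if x == l then w else f x)).
apply: (@simple_path_insert _ _ _ _ _ id) => //; first by move=> x xl xp /=; lia.
move=> x xl /=; case_ifs; try lia; last by apply: (simple_path_adj fpath); lia.
have -> : x = l.-1 by lia.
by rewrite Fsym.
Qed.

Lemma longest_path_nonadj_succ i : i.+1 < l -> F w (f i) -> ~~ F w (f i.+1).
Proof.
move=> il F1; apply/negP => F2; apply: (@longer_path_absurd
  (fun x => if x == i.+1 then w else f (if x <= i then x else x.-1))).
apply: simple_path_insert => //; [move=> x|move=> x y|move=> x] => /=;
  case_ifs; move=> *; try lia; try (by apply: (simple_path_adj fpath); lia).
- by have -> : x = i.+1 by lia.
- have -> : x = i by lia.
  by rewrite Fsym.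
Qed.

(* Otherwise f 0 .. f i, w, f j, f (j-1), .., f (i+1), f (j+1), .., f (l-1)
   would be a longer path. *)
Lemma longest_path_succs_nonadj i j : i < j -> j.+1 < l ->
  F w (f i) -> F w (f j) -> ~~ F (f i.+1) (f j.+1).
Proof.
move=> ij jl F1 F2; apply/negP => F3; apply: (@longer_path_absurd
  (fun x => if x == i.+1 then w else
     f (if x <= i then x else if x <= j.+1 then i + j + 2 - x else x.-1))).
apply: simple_path_insert => //; [move=> x|move=> x y|move=> x] => /=;
  case_ifs; move=> *; try lia; try (by apply: (simple_path_adj fpath); lia).
- by have -> : i + j + 2 - x.+1 = j by lia.
- have -> : x = i by lia.
  by rewrite Fsym.
- have -> : i + j + 2 - x = i.+1 by lia.
  by have -> : x = j.+1 by lia.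
Qed.

Lemma longest_path_rich_outsider k :
  k.*2 <= #|[set i : 'I_l | F w (f i)]| -> has_anticomplete_pair k.
Proof.
set N := [set i | _] => cN.
have NF i : i \in N -> F w (f i) by rewrite inE.
have Nlt i : i \in N -> i.+1 < l.
  move=> /NF Fi; rewrite ltn_neqAle ltn_ord andbT; apply/eqP => e.
  have := longest_path_last_nonadj (leq_ltn_trans (leq0n _) (ltn_ord i)).
  by rewrite (_ : l.-1 = i) ?Fi //; lia.
have [_ finj _] := fpath.
apply: (@anticomplete_pair_of_stable (w |: [set f i.+1 | i : 'I_l in N])).
  rewrite cardsU1 card_in_imset.
    have -> : w \notin [set f i.+1 | i : 'I_l in N].
      by apply/imsetP => -[i iN /esym]; apply: w_off; exact: Nlt.
    by rewrite add1n ltnS.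
  by move=> i j /Nlt iN /Nlt jN /finj => /(_ iN jN) /succn_inj /val_inj.
move=> x y /setU1P [->|/imsetP [i iN ->]] /setU1P [->|/imsetP [j jN ->]].
- by rewrite Firr.
- exact: longest_path_nonadj_succ (Nlt _ jN) (NF _ jN).
- by rewrite Fsym; exact: longest_path_nonadj_succ (Nlt _ iN) (NF _ iN).
- case: (ltngtP i j) => ij.
  + exact: longest_path_succs_nonadj ij (Nlt _ jN) (NF _ iN) (NF _ jN).
  + by rewrite Fsym; exact: longest_path_succs_nonadj ij (Nlt _ iN) (NF _ jN) (NF _ iN).
  + by rewrite ij Firr.
Qed.

End LongestPath.

Lemma longest_path_anticomplete (D : {set V}) f l k : simple_path D f l ->
  (forall g l', simple_path D g l' -> l' <= l) ->
  (k * k).*2.+1 <= l -> l + k <= #|D| -> has_anticomplete_pair k.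
Proof.
move=> fpath longest lbig Dbig; have [fD finj _] := fpath.
pose P := [set f i | i : 'I_l].
have cP : #|P| = l.
  rewrite card_imset ?card_ord // => i j e.
  exact/val_inj/(finj _ _ (ltn_ord i) (ltn_ord j) e).
have fP a : a < l -> f a \in P by move=> al; apply/imsetP; exists (Ordinal al).
have PD : P \subset D by apply/subsetP => _ /imsetP [i _ ->]; exact: fD.
pose W := D :\: P; pose N w := [set i : 'I_l | F w (f i)].
have W_off w : w \in W -> forall a, a < l -> f a <> w.
  by move=> /setDP [_ wP] a al e; move: wP; rewrite -e fP.
case: (classic (exists2 w, w \in W & k.*2 <= #|N w|)) => [[w wW cN]|poor].
  have [wD _] := setDP wW.
  exact: (longest_path_rich_outsider fpath longest wD (W_off w wW) cN).
apply: (@anticomplete_pair_of_sparse P W k k.*2.-1).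
- by rewrite disjoint_sym disjoints_subset /W setDE subsetIr.
- by rewrite cardsDS //; lia.
- by rewrite cP; nia.
move=> w wW; have cN : #|N w| < k.*2.
  by rewrite ltnNge; apply/negP => cN; apply: poor; exists w.
suff: #|P :&: [set v | F w v]| <= #|N w| by lia.
apply: leq_trans (leq_imset_card (fun i : 'I_l => f i) _).
apply/subset_leq_card/subsetP => _ /setIP [/imsetP [i _ ->]].
by rewrite inE => Fi; apply/imsetP; exists i; rewrite ?inE.
Qed.

(* [S] holds the finished vertices, [U] the unvisited ones and [g] the stack. *)
Definition dfs_state (D S U : {set V}) (g : nat -> V) (len : nat) : Prop :=
  [/\ simple_path D g len, U \subset D, anticomplete S U,
      forall a, a < len -> g a \notin S :|: U
    & #|S| + #|U| + len = #|D|].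

Lemma dfs_state_init (D : {set V}) g : dfs_state D set0 D g 0.
Proof.
split=> //; last by rewrite cards0 addn0.
by split=> [|x y]; [rewrite disjoints_subset sub0set | rewrite inE].
Qed.

Lemma dfs_push D S U g len u : dfs_state D S U g len -> u \in U ->
  (0 < len -> F (g len.-1) u) ->
  dfs_state D S (U :\ u) (fun x => if x == len then u else g x) len.+1.
Proof.
move=> [[gD ginj gF] UD [dSU SU] goff c] uU Fu.
have g_ne_u a : a < len -> g a <> u.
  by move=> /goff + gu; rewrite gu !inE uU orbT.
split.
- split=> [a al|a b al bl|a al].
  + by case: eqP => [_|ne]; [exact: (subsetP UD) | apply: gD; lia].
  + case: eqP => ea; case: eqP => eb.
    * by rewrite ea eb.
    * by move/esym/(g_ne_u b); lia.
    * by move/(g_ne_u a); lia.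
    * by apply: ginj; lia.
  + case: eqP => [ea|_]; first lia.
    case: eqP => [ea|ne]; last by apply: gF; lia.
    by rewrite (_ : a = len.-1); [apply: Fu | ]; lia.
- exact: subset_trans (subsetDl _ _) UD.
- split; first exact: disjointWr (subsetDl _ _) dSU.
  by move=> x y xS /setD1P [_ yU]; exact: SU.
- move=> a al; case: eqP => [_|ne].
    by rewrite !inE eqxx (disjointFl dSU uU).
  apply: contra (goff a _); last lia.
  by rewrite !inE => /orP [->|/andP [_ ->]]; rewrite ?orbT.
- by move: c; rewrite (cardsD1 u U) uU; lia.
Qed.

Lemma dfs_pop D S U g len : dfs_state D S U g len.+1 ->
  (forall u, u \in U -> ~~ F (g len) u) -> dfs_state D (g len |: S) U g len.
Proof.
move=> [gpath UD [dSU SU] goff c] nadj; have [_ ginj _] := gpath.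
have := goff len (ltnSn len); rewrite inE negb_or => /andP [gS gU].
split=> //.
- exact: simple_path_prefix gpath.
- split; first by rewrite disjoints_subset subUset sub1set inE gU -disjoints_subset.
  by move=> x y /setU1P [->|xS] yU; [exact: nadj | exact: SU].
- move=> a al; have g_ne : (g a == g len) = false by apply/eqP => /ginj; lia.
  by have := goff a (ltnW al); rewrite !inE g_ne.
- by move: c; rewrite cardsU1 gS; lia.
Qed.

Lemma dfs_reach D S U g len k : dfs_state D S U g len -> #|S| <= k <= #|D| ->
  exists S' U' g' len', dfs_state D S' U' g' len' /\ #|S'| = k.
Proof.
move=> st hk; have [d hd] : exists d, (#|U|).*2 + len <= d by exists ((#|U|).*2 + len).
elim: d S U g len st hk hd => [|d IH] S U g len st /andP [Sk kD] hd;
  (case: (eqVneq #|S| k) => [<-|neS]; first by exists S, U, g, len).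
  by case: st => _ _ _ _; lia.
have Sk' : #|S| < k by rewrite ltn_neqAle neS.
case: len => [|len] in st hd *.
  have /set0Pn [u uU] : U != set0.
    by apply/eqP => U0; case: st => _ _ _ _; rewrite U0 cards0; lia.
  apply: IH (dfs_push st uU _) _ _ => //; first by apply/andP; split; lia.
  by move: hd; rewrite (cardsD1 u U) uU; lia.
case: (boolP [exists u in U, F (g len) u]) => [/exists_inP [u uU Fu]|].
  apply: IH (dfs_push st uU (fun _ => Fu)) _ _; first by apply/andP; split; lia.
  by move: hd; rewrite (cardsD1 u U) uU; lia.
move/exists_inPn => nadj; have [_ _ _ goff _] := st.
have := goff len (ltnSn len); rewrite inE negb_or => /andP [gS _].
apply: IH (dfs_pop st nadj) _ _; last lia.
by rewrite cardsU1 gS; apply/andP; split; lia.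
Qed.

Lemma short_paths_anticomplete (D : {set V}) L k :
  (forall g l, simple_path D g l -> l <= L) -> L + k.*2.+1 <= #|D| ->
  has_anticomplete_pair k.
Proof.
move=> short cD; have /set0Pn [x0 _] : D != set0 by rewrite -card_gt0; lia.
have hk : #|@set0 V| <= k.+1 <= #|D| by rewrite cards0; lia.
have [S [U [g [len [[gpath _ SU _ c] cS]]]]] :=
  dfs_reach (dfs_state_init D (fun _ => x0)) hk.
by exists S, U; split=> //; [rewrite cS | have := short _ _ gpath; lia].
Qed.

Lemma path_or_anticomplete (D : {set V}) k n :
  3 <= k -> (k - 1) * (4 * k - 1) + 1 <= n -> n + k - 1 <= #|D| ->
  (exists g, simple_path D g n) \/ has_anticomplete_pair k.
Proof.
move=> k3 hn cD.
case: (classic (exists g, simple_path D g n)) => [|no_path]; [by left | right].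
have short g l : simple_path D g l -> l < n.
  move=> gpath; rewrite ltnNge; apply/negP => nl; apply: no_path; exists g.
  exact: simple_path_prefix gpath.
case: (classic (exists g, simple_path D g (k * k).*2.+1)) => [[g0 g0path]|no_long].
  have [l [[g gpath] longest]] : exists l, (exists g, simple_path D g l) /\
      forall l', (exists g, simple_path D g l') -> l' <= l.
    apply: (@bounded_ex_max _ #|D|); last by exists (k * k).*2.+1, g0.
    by move=> l [g gpath]; exact: simple_path_size gpath.
  apply: (longest_path_anticomplete gpath) => [g' l' g'path||].
  - by apply: longest; exists g'.
  - by apply: longest; exists g0.
  - by have := short _ _ gpath; lia.
apply: (@short_paths_anticomplete D (k * k).*2) => [g l gpath|]; last nia.
rewrite leqNgt; apply/negP => long; apply: no_long; exists g.
exact: simple_path_prefix gpath.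
Qed.

Definition disjoint_paths (D : {set V}) (G : nat -> nat -> V) (j n : nat) : Prop :=
  (forall i, i < j -> simple_path D (G i) n) /\
  (forall i i' a b, i < j -> i' < j -> a < n -> b < n -> G i a = G i' b -> i = i').

Lemma disjoint_paths_or_anticomplete k n j (D : {set V}) :
  3 <= k -> (k - 1) * (4 * k - 1) + 1 <= n -> j * n + k - 1 <= #|D| ->
  (exists G, disjoint_paths D G j n) \/ has_anticomplete_pair k.
Proof.
move=> k3 hn; elim: j D => [|j IH] D cD.
  have /set0Pn [x0 _] : D != set0 by rewrite -card_gt0; lia.
  by left; exists (fun _ _ => x0); split=> i; rewrite ltn0.
have cDn : n + k - 1 <= #|D| by rewrite mulSn in cD; lia.
have [[g gpath]|] := path_or_anticomplete k3 hn cDn; last by right.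
pose P := [set g a | a : 'I_n].
have gP a : a < n -> g a \in P by move=> an; apply/imsetP; exists (Ordinal an).
have cP : #|P| <= n.
  by apply: leq_trans (leq_imset_card _ _) _; rewrite card_ord.
have cDP : j * n + k - 1 <= #|D :\: P|.
  by rewrite cardsD; have := subset_leq_card (subsetIr D P); rewrite mulSn in cD; lia.
have [[G [Gpath Gdisj]]|] := IH _ cDP; last by right.
left; exists (fun i => if i == j then g else G i); split.
  move=> i ij; case: eqP => // ne.
  by apply: simple_path_sub (subsetDl _ _) (Gpath i _); lia.
move=> i i' a b ij i'j an bn; case: eqP => ei; case: eqP => ei'.
- by rewrite ei ei'.
- have [GD _ _] := Gpath i' ltac:(lia).
  by move=> e; move: (GD b bn); rewrite -e => /setDP [_]; rewrite gP.
- have [GD _ _] := Gpath i ltac:(lia).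
  by move=> e; move: (GD a an); rewrite e => /setDP [_]; rewrite gP.
- by apply: Gdisj; lia.
Qed.

Lemma tPn_of_disjoint_paths G t n :
  disjoint_paths setT G t n -> contains_subgraph F (tPn_rel t n).
Proof.
move=> [Gpath Gdisj]; exists (fun p : 'I_t * 'I_n => G p.1 p.2); split.
  move=> [i a] [i' b] /= e.
  have ii' : i = i'.
    exact/val_inj/(Gdisj _ _ _ _ (ltn_ord i) (ltn_ord i') (ltn_ord a) (ltn_ord b) e).
  subst i'; have [_ ginj _] := Gpath _ (ltn_ord i).
  by congr pair; apply/val_inj/(ginj _ _ (ltn_ord a) (ltn_ord b) e).
move=> [i a] [i' b] /andP [/eqP /= ii' ab]; subst i'.
apply: (simple_path_adj (Gpath _ (ltn_ord i))) => //.
by case/orP: ab => /eqP <-; [left | right].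
Qed.

End HostGraph.

Lemma bipartite_in_complement (V W : finType) (F : rel V) (G : rel W)
    (X Y : {set V}) (side : W -> bool) (idx : W -> nat) (x0 : V) :
  symmetric F -> anticomplete F X Y ->
  (forall u v, G u v -> side u != side v) ->
  (forall u v, side u = side v -> idx u = idx v -> u = v) ->
  (forall u, idx u < #|if side u then X else Y|) ->
  contains_subgraph (complement F) G.
Proof.
move=> Fsym [dXY nXY] Gside idx_inj idx_lt.
pose f u := nth x0 (enum (if side u then X else Y)) (idx u).
have fside u : f u \in (if side u then X else Y).
  by rewrite -mem_enum mem_nth // -cardE.
have f_cross u v : side u -> ~~ side v -> (f u != f v) && ~~ F (f u) (f v).
  move=> su sv; have := fside u; have := fside v; rewrite su (negbTE sv) => fv fu.
  rewrite nXY // andbT; apply/eqP => e.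
  by move: fv; rewrite -e (disjointFr dXY fu).
exists f; split=> [u v e|u v /Gside].
  case: (eqVneq (side u) (side v)) => [suv|].
    apply: (idx_inj _ _ suv); apply/eqP.
    move: e (idx_lt u) (idx_lt v); rewrite /f -suv cardE => /eqP e lu lv.
    by rewrite -(nth_uniq x0 lu lv (enum_uniq _)).
  by case: (boolP (side u)); case: (boolP (side v)) => // sv su _;
    [have := f_cross u v su sv | have := f_cross v u sv su]; rewrite e eqxx.
rewrite /complement; case: (boolP (side u)); case: (boolP (side v)) => //= sv su _.
  exact: f_cross.
by rewrite eq_sym Fsym; exact: f_cross.
Qed.

Section Jahangir.
Variables s m : nat.
Hypothesis s_even : 2 %| s.

(* The colour classes are the hub with the odd cycle vertices, and the even
   cycle vertices; [jahangir_index] numbers each class from 0. *)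
Definition jahangir_side (u : option 'I_(s * m)) : bool :=
  if u is Some i then odd i else true.

Definition jahangir_index (u : option 'I_(s * m)) : nat :=
  if u is Some i then uphalf i else 0.

Lemma jahangir_rel_side u v :
  jahangir_rel s m u v -> jahangir_side u != jahangir_side v.
Proof.
have hub_even (j : 'I_(s * m)) : s %| j -> ~~ odd j.
  by move=> sj; rewrite -dvdn2; exact: dvdn_trans sj.
have cycle_step (i j : 'I_(s * m)) : val j = i.+1 %% (s * m) -> odd i != odd j.
  move=> ->; have := ltn_ord i; rewrite leq_eqVlt => /orP [/eqP sm|lt].
    rewrite sm modnn /=; suff : ~~ odd i.+1 by rewrite /= negbK => ->.
    by rewrite sm oddM negb_and -dvdn2 s_even.
  by rewrite modn_small //=; case: (odd i).
case: u v => [i|] [j|] //= => [/orP [/eqP|/eqP]|/hub_even|/hub_even].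
- exact: cycle_step.
- by rewrite eq_sym; apply: cycle_step.
- by case: (odd i).
- by case: (odd j).
Qed.

Lemma jahangir_index_inj u v : jahangir_side u = jahangir_side v ->
  jahangir_index u = jahangir_index v -> u = v.
Proof.
case: u v => [i|] [j|] //= => [oij|oi|oj].
- rewrite !uphalf_half oij => /addnI hij; congr Some; apply: val_inj.
  by rewrite -[val i]odd_double_half -[val j]odd_double_half oij hij.
- by rewrite uphalf_half oi.
- by rewrite uphalf_half -oj.
Qed.

Lemma jahangir_index_lt k u : s * m = k.*2 ->
  jahangir_index u < (if jahangir_side u then k.+1 else k).
Proof.
case: u => [[i /= +]|] smk //=; rewrite smk uphalf_half.
by have := odd_double_half i; case: (odd i) => /=; lia.
Qed.

Lemma jahangir_in_complement (V : finType) (F : rel V) k :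
  symmetric F -> s * m = k.*2 -> has_anticomplete_pair F k ->
  contains_subgraph (complement F) (jahangir_rel s m).
Proof.
move=> Fsym smk [X [Y [XY cX cY]]].
have /set0Pn [x0 _] : X != set0 by rewrite -card_gt0; lia.
apply: (bipartite_in_complement x0 Fsym XY jahangir_rel_side)
  jahangir_index_inj _ => u.
by have := jahangir_index_lt u smk; case: (jahangir_side u); lia.
Qed.

End Jahangir.

Definition two_cliques (N c : nat) : rel 'I_N :=
  fun x y => (x != y) && ((x < c) == (y < c)).
Arguments two_cliques N c : clear implicits.

Lemma two_cliques_simple (N c : nat) : simple_graph (two_cliques N c).
Proof.
split=> [x y|x]; last by rewrite /two_cliques eqxx.
by rewrite /two_cliques eq_sym [(y < c) == _]eq_sym.
Qed.

Lemma two_cliques_tPn_free (N c t n : nat) : c < t * n -> N - c < n ->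
  ~ contains_subgraph (two_cliques N c) (tPn_rel t n).
Proof.
move=> ctn Ncn [f [finj fe]]; have n0 : 0 < n by lia.
have side_copy (i : 'I_t) (a : 'I_n) : (f (i, a) < c) = (f (i, Ordinal n0) < c).
  case: a => a; elim: a => [|a IH] ha; first by congr (f (i, _) < c); apply: val_inj.
  rewrite -(IH (ltnW ha)).
  have := fe (i, Ordinal (ltnW ha)) (i, Ordinal ha).
  by rewrite /tPn_rel /= !eqxx => /(_ isT) /andP [_ /eqP].
case: (classic (exists i : 'I_t, c <= f (i, Ordinal n0))) => [[i ci]|low].
  suff : #|'I_n| <= N - c by rewrite card_ord; lia.
  apply: (@card_le_inj_interval _ _ (fun a => f (i, a))) => [a b /finj [] //|a].
  by rewrite ltn_ord andbT leqNgt side_copy -leqNgt.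
suff : #|{: 'I_t * 'I_n}| <= c - 0 by rewrite card_prod !card_ord; lia.
apply: (@card_le_inj_interval _ _ f) => // -[i a] /=.
rewrite side_copy ltnNge; apply/negP => ci; apply: low; by exists i.
Qed.

Lemma complement_two_cliques_jahangir_free (N c s m k : nat) :
  s * m = k.*2 -> N - c < k ->
  ~ contains_subgraph (complement (two_cliques N c)) (jahangir_rel s m).
Proof.
move=> smk Nck [f [finj fe]]; have sm0 : 0 < s * m by lia.
have side_cycle i (hi : i < s * m) :
    (f (Some (Ordinal hi)) < c) = (f (Some (Ordinal sm0)) < c) (+) odd i.
  elim: i hi => [|i IH] hi.
    by rewrite addbF; congr (f (Some _) < c); apply: val_inj.
  have hi' : i < s * m by lia.
  have := fe (Some (Ordinal hi')) (Some (Ordinal hi)).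
  rewrite /jahangir_rel /= modn_small // eqxx /complement /two_cliques.
  move=> /(_ isT) /andP [-> /=]; rewrite (IH hi') /=.
  by case: (f (Some (Ordinal hi)) < c); case: (f (Some (Ordinal sm0)) < c);
    case: (odd i).
(* The k cycle vertices 2a + b, a < k, are all mapped into [c, N). *)
pose b := f (Some (Ordinal sm0)) < c.
have lt (a : 'I_k) : a.*2 + b < s * m.
  by have := ltn_ord a; rewrite smk; case: b => /=; lia.
suff : #|'I_k| <= N - c by rewrite card_ord; lia.
apply: (@card_le_inj_interval _ _ (fun a : 'I_k => f (Some (Ordinal (lt a))))).
  by move=> a a' /finj [] e; apply: ord_inj; lia.
move=> a; rewrite ltn_ord andbT leqNgt side_cycle -/b oddD odd_double /=.
by case: (b).
Qed.

Theorem theorem3 (s m t n : nat) :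
  2 <= s -> ~~ odd s -> 3 <= m -> 1 <= t ->
  ((s * m) %/ 2 - 1) * (2 * s * m - 1) + 1 <= n ->
  is_ramsey_number (tPn_rel t n) (jahangir_rel s m) (t * n + (s * m) %/ 2 - 1).
Proof.
move=> s2 s_even m3 t1 hn; set k := (s * m) %/ 2.
have s2d : 2 %| s by rewrite dvdn2.
have smk : s * m = k.*2 by rewrite /k -muln2 divnK // dvdn_mulr.
have k3 : 3 <= k by have := leq_mul s2 m3; lia.
have hn' : (k - 1) * (4 * k - 1) + 1 <= n.
  by have -> : 4 * k = 2 * s * m by rewrite -mulnA smk; lia.
split=> [F [Fsym Firr]|N hN ramsey].
  have cV : t * n + k - 1 <= #|[set: 'I_(t * n + k - 1)]| by rewrite cardsT card_ord.
  have [[G Gpaths]|anti] := disjoint_paths_or_anticomplete Fsym Firr k3 hn' cV.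
    by left; exact: tPn_of_disjoint_paths Gpaths.
  by right; exact (jahangir_in_complement s2d Fsym smk anti).
have [|] := ramsey (two_cliques N (t * n - 1)) (two_cliques_simple _ _).
  by apply: two_cliques_tPn_free; nia.
by apply: complement_two_cliques_jahangir_free smk _; lia.
Qed.
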